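(* Consider the following two-player game. Each player $i \in \{1,2\}$ privately knows her type $\theta_i$, her valuation of an indivisible object; types are drawn independently from a common absolutely continuous distribution $F$ with support $\Theta = (\underline{\theta}, \overline{\theta})$, $0 \le \underline{\theta} < \overline{\theta} \le \infty$, whose density $f$ is continuous and strictly positive on $(\underline{\theta}, \overline{\theta})$. Each player simultaneously chooses a stopping time $a_i \in [0,\infty]$; a (pure) strategy is a function $\sigma_i : \Theta \to [0,\infty]$. Payoffs are $u_i(a_i,a_{-i},\theta_i) = \theta_i - a_{-i}$ if $a_i > a_{-i}$, $\theta_i/2 - a_i$ if $a_i = a_{-i}$, and $-a_i$ if $a_i < a_{-i}$. Let $(\sigma_1,\sigma_2)$ be a Bayesian Nash equilibrium, and for $i\in\{1,2\}$ let $\overline{\theta}_i := \inf\{\theta \in \Theta : \sigma_i(\theta) = \infty\}$ (the lowest type of player $i$ that fights forever). Then at most one player has a positive mass of types choosing $\infty$, in the sense that $\max\{\overline{\theta}_1, \overline{\theta}_2\} = \overline{\theta}$.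
   Context: Equilibrium concept: Bayesian Nash equilibrium in pure strategies, each type maximizing expected payoff given the opponent's strategy and the prior $F$. The infimum of the empty set is taken to be $\overline{\theta}$. *)

From HB Require Import structures.
From mathcomp Require Import all_boot all_order all_algebra.
From mathcomp Require Import all_classical all_reals all_analysis.
From mathcomp Require Import measurable_realfun.
Set Implicit Arguments. Unset Strict Implicit. Unset Printing Implicit Defensive.
Import Order.TTheory GRing.Theory Num.Theory.
Import numFieldNormedType.Exports.
Local Open Scope classical_set_scope.
Local Open Scope ring_scope.
Local Open Scope ereal_scope.

Definition Theta {R : realType} (thl : R) (thh : \bar R) : set R :=
  [set x : R | (thl < x)%R /\ x%:E < thh].

Definition payoff {R : realType} (ai aj : \bar R) (th : R) : \bar R :=
  if aj < ai then th%:E - aj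
  else if ai == aj then (th / 2)%:E - ai
  else - ai.

Definition exp_payoff {R : realType} (P : probability R R) (thl : R) (thh : \bar R)
  (sj : R -> \bar R) (a : \bar R) (th : R) : \bar R :=
  \int[P]_(t in Theta thl thh) payoff a (sj t) th.

Definition strategy {R : realType} (thl : R) (thh : \bar R) (s : R -> \bar R) : Prop :=
  measurable_fun (Theta thl thh) s /\ (forall th, Theta thl thh th -> 0 <= s th).

Definition best_response {R : realType} (P : probability R R) (thl : R) (thh : \bar R)
  (si sj : R -> \bar R) : Prop :=
  forall th, Theta thl thh th -> forall a : \bar R, 0 <= a ->
    exp_payoff P thl thh sj a th <= exp_payoff P thl thh sj (si th) th.

Definition BNE {R : realType} (P : probability R R) (thl : R) (thh : \bar R)
  (s1 s2 : R -> \bar R) : Prop :=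
  [/\ strategy thl thh s1, strategy thl thh s2,
      best_response P thl thh s1 s2 & best_response P thl thh s2 s1].

Definition theta_bar {R : realType} (thl : R) (thh : \bar R) (s : R -> \bar R) : \bar R :=
  let S := [set th | Theta thl thh th /\ s th = +oo] in
  if `[< S = set0 >] then thh else ereal_inf (EFin @` S).

From HB Require Import structures.
From mathcomp Require Import all_boot all_order all_algebra.
From mathcomp Require Import all_classical all_reals all_analysis.
From mathcomp Require Import measurable_realfun.
From mathcomp Require Import lra.
Import Order.TTheory GRing.Theory Num.Theory.
Import numFieldNormedType.Exports.
Local Open Scope classical_set_scope.
Local Open Scope ring_scope.
Local Open Scope ereal_scope.

(* Suppose a type t1 of player 1 and a type t2 of player 2 both fight forever.
   A type that prefers fighting forever to quitting at once expects a finite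
   opponent stopping time, so the opponent fights forever with probability zero.
   Single crossing: the gain from fighting forever rather than quitting at r is
   nondecreasing in the type, and increases by at least (th - th0) / 2 against
   opponents who would still be fighting at r.  Since t1 prefers fighting
   forever to quitting at s1 th while th > t1 prefers the converse, almost
   every opponent quits strictly before s1 th; symmetrically for player 2.
   On the set S of types above t1 and t2, which has positive probability, we
   thus get s2 < s1 th and s1 < s2 th almost surely for every th in S.  The
   first claim yields a th in S with s2 th below the infimum of s1 over S,
   and then s1 >= s2 th on all of S contradicts the second. *)

Section null_sets.
Context {d} {T : measurableType d} {R : realType} (mu : {measure set T -> \bar R}).

Lemma integrable_pinfty_null {D : set T} {f : T -> \bar R} :
  measurable D -> mu.-integrable D f -> mu (D `&` f @^-1` [set +oo]) = 0.
Proof.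
move=> mD fint; have [mf _] := integrableP _ _ _ fint.
have [N [mN N0 finN]] := integrable_ae mD fint.
apply/eqP; rewrite eq_le measure_ge0 andbT -N0.
apply: le_measure; rewrite ?inE //; first exact: mf.
by move=> t [Dt /= ft]; apply: finN => /(_ Dt); rewrite ft.
Qed.

Lemma integral_cstB_ge0_lt_pinfty {D : set T} {f : T -> \bar R} {c : R} :
  measurable D -> mu D < +oo -> measurable_fun D f -> (forall t, D t -> 0 <= f t) ->
  (0 <= c)%R -> 0 <= \int[mu]_(t in D) (c%:E - f t) ->
  \int[mu]_(t in D) f t < +oo.
Proof.
move=> mD muD mf f0 c0 gint; set g := fun t => c%:E - f t.
have mg : measurable_fun D g by apply: emeasurable_funB.
have cmuD : c%:E * mu D \is a fin_num.
  by rewrite fin_numM // ge0_fin_numE // ltey_eq.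
rewrite ltey; apply/eqP => fpinfty.
have gneg : \int[mu]_(t in D) g^\- t = +oo.
  have : \int[mu]_(t in D) f t <= \int[mu]_(t in D) g^\- t + c%:E * mu D.
    rewrite -integral_cst // -ge0_integralD //; last exact: measurable_funeneg.
    apply: ge0_le_integral => //.
      by apply: emeasurable_funD => //; exact: measurable_funeneg.
    move=> t Dt; rewrite funenegE /g.
    case: (f t) (f0 t Dt) => [r| |] //= r0.
    by rewrite -EFin_max -EFinD lee_fin -lerBlDr le_max opprB lexx.
  rewrite fpinfty; move: cmuD; case: (c%:E * mu D) => [e||] // _.
  by case: (\int[mu]_(t in D) g^\- t).
have gpos : \int[mu]_(t in D) g^\+ t <= c%:E * mu D.
  rewrite -integral_cst //; apply: ge0_le_integral => //; first exact: measurable_funepos.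
  move=> t Dt; rewrite funeposE /g ge_max lee_fin c0 andbT.
  case: (f t) (f0 t Dt) => [r| |] //= r0.
  - by rewrite -EFinB !lee_fin in r0 *; lra.
  - exact: leNye.
move: gint; rewrite integralE gneg.
have : 0 <= \int[mu]_(t in D) g^\+ t by apply: integral_ge0.
by move: gpos; case: (\int[mu]_(t in D) g^\+ t).
Qed.

Lemma integral_le0_null {D E N : set T} {G : T -> \bar R} {c : R} :
  measurable D -> measurable E -> measurable N -> E `<=` D -> mu N = 0 ->
  mu.-integrable D G -> (0 < c)%R ->
  (forall t, (D `\` N) t -> 0 <= G t) -> (forall t, (E `\` N) t -> c%:E <= G t) ->
  \int[mu]_(t in D) G t <= 0 -> mu E = 0.
Proof.
move=> mD mE mN ED muN0 iG c0 G0 Gc IG.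
have mG : measurable_fun D G by case/integrableP: iG.
have mEN : measurable (E `\` N) by exact: measurableD.
have ENDN : E `\` N `<=` D `\` N by move=> t [/ED].
have cEN : c%:E * mu (E `\` N) <= 0.
  rewrite -integral_cst //; apply: le_trans IG.
  rewrite (negligible_integral mN mD iG muN0).
  apply: (@le_trans _ _ (\int[mu]_(t in E `\` N) G t)).
    apply: ge0_le_integral => //; first by move=> t _; rewrite lee_fin ltW.
    by apply: measurable_funS mG => // t [/ED].
  apply: ge0_subset_integral => //; first exact: measurableD.
  by apply: measurable_funS mG => // t [].
have muEN0 : mu (E `\` N) = 0.
  by apply/eqP; rewrite eq_le measure_ge0 andbT -(@pmule_rle0 _ c%:E) ?lte_fin.
apply/eqP; rewrite eq_le measure_ge0 andbT -muEN0 -(measureU0 mEN mN muN0).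
apply: le_measure; rewrite ?inE //; first exact: measurableU.
by move=> t Et; have [Nt|Nt] := pselect (N t); [right | left].
Qed.

Lemma ereal_inf_lt_null {I : Type} {D : set T} {S : set I} {g : I -> \bar R}
    {h : T -> \bar R} :
  measurable D -> measurable_fun D h -> (forall i, S i -> 0 <= g i) ->
  (forall i, S i -> mu (D `&` [set t | g i <= h t]) = 0) ->
  mu (D `&` [set t | ereal_inf (g @` S) < h t]) = 0.
Proof.
move=> mD mh g0 gh0; set z := ereal_inf (g @` S).
have mDz : measurable (D `&` [set t | z < h t]) by exact: emeasurable_fun_o_infty.
apply/(negligibleP _ mDz).
have : 0 <= z by apply/ereal_infP => _ [i Si <-]; exact: g0.
case Ez: z => [r| |] // r0.
- pose N n := D `&` [set t | (r + n.+1%:R^-1)%:E <= h t].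
  have NN n : mu.-negligible (N n).
    have : z < (r + n.+1%:R^-1)%:E by rewrite Ez lte_fin ltrDl invr_gt0 ltr0n.
    case/ereal_inf_lt => _ [i Si <-] gir.
    exists (D `&` [set t | g i <= h t]); split.
    + exact: emeasurable_fun_c_infty.
    + exact: gh0.
    + by move=> t [Dt /= rh]; split => //=; apply: le_trans (ltW gir) rh.
  apply: negligibleS (negligible_bigcup NN) => t [Dt /=].
  case Eh: (h t) => [y| |] // rh.
  + have [k rk] := ltr_add_invr rh.
    by exists k => //; split => //=; rewrite Eh lee_fin ltW.
  + by exists 0%N => //; split => //=; rewrite Eh leey.
- by exists set0; split => // t [_ /=]; rewrite ltNge leey.
Qed.

Lemma no_mutual_outlasting {D S : set T} {g h : T -> \bar R} :
  measurable D -> measurable S -> S `<=` D -> 0 < mu S ->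
  measurable_fun D g -> measurable_fun D h -> (forall t, S t -> 0 <= g t) ->
  (forall t, S t -> mu (D `&` [set u | g t <= h u]) = 0) ->
  (forall t, S t -> mu (D `&` [set u | h t <= g u]) = 0) -> False.
Proof.
move=> mD mS SD muS mg mh g0 gh0 hg0; set z := ereal_inf (g @` S).
have [t St htz] : exists2 t, S t & h t <= z.
  apply: contrapT => /forall2NP hz.
  have : mu S <= mu (D `&` [set u | z < h u]).
    apply: le_measure; rewrite ?inE //; first exact: emeasurable_fun_o_infty.
    by move=> u Su; split; [exact: SD | rewrite /= ltNge; apply/negP; case: (hz u)].
  by rewrite (ereal_inf_lt_null mD mh g0 gh0) => /(lt_le_trans muS); rewrite ltxx.
have : mu S <= mu (D `&` [set u | h t <= g u]).
  apply: le_measure; rewrite ?inE //; first exact: emeasurable_fun_c_infty.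
  move=> u Su; split; first exact: SD.
  by apply: le_trans htz _; apply: ge_ereal_inf; exists (g u) => //; exists u.
by rewrite hg0 // => /(lt_le_trans muS); rewrite ltxx.
Qed.

End null_sets.

Lemma density_open_gt0 {R : realType} {mu : {measure set R -> \bar R}} {f : R -> R}
    {U : set R} {x : R} :
  (forall A, measurable A -> mu A = \int[lebesgue_measure]_(y in A) (f y)%:E) ->
  open U -> (forall y, U y -> {for y, continuous f}) -> U x -> (0 < f x)%R ->
  0 < mu U.
Proof.
move=> muf oU fc Ux fx0.
have /nbhs_ballP[e /= e0 eU] : \forall y \near x, U y /\ (f x / 2 < f y)%R.
  apply: filterI; first exact: open_nbhs_nbhs.
  by apply: (@cvgr_gt _ _ (nbhs x) _ f (f x) (fc x Ux)); rewrite ltr_pdivrMr // ltr_pMr // ltr1n.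
have mball := measurable_ball x e.
apply: (@lt_le_trans _ _ (mu (ball x e))); last first.
  by apply: le_measure; rewrite ?inE //; [exact: open_measurable | move=> y /eU[]].
rewrite muf // (@lt_le_trans _ _ ((f x / 2) * (e *+ 2))%:E) //.
  by rewrite lte_fin mulr_gt0 ?divr_gt0 ?mulrn_wgt0.
rewrite EFinM -(lebesgue_measure_ball x (ltW e0)) -integral_cst //.
apply: ge0_le_integral => //.
- by move=> y _; rewrite lee_fin ltW ?divr_gt0.
- apply/measurable_EFinP; apply: open_continuous_measurable_fun; first exact: ball_open.
  by move=> y /[1!inE] /eU[Uy _]; exact: fc.
- by move=> y /eU[_ fy]; rewrite lee_fin ltW.
Qed.

Lemma open_Theta {R : realType} (thl : R) (thh : \bar R) : open (Theta thl thh).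
Proof. by apply: openI; [exact: open_gt | exact: open_ereal_lt]. Qed.

Lemma measurable_Theta {R : realType} (thl : R) (thh : \bar R) :
  measurable (Theta thl thh).
Proof. exact: open_measurable (open_Theta thl thh). Qed.

Lemma Theta_exists_gt {R : realType} {thl : R} {thh : \bar R} {m : R} :
  Theta thl thh m -> exists2 x, Theta thl thh x & (m < x)%R.
Proof.
case=> lm; case: thh => [h| |] //= mh.
- by exists ((m + h) / 2)%R; [split; rewrite ?lte_fin /=|]; rewrite lte_fin in mh; lra.
- by exists (m + 1)%R; [split; rewrite ?ltry /=|]; lra.
Qed.

Lemma theta_bar_le {R : realType} (thl : R) (thh : \bar R) (s : R -> \bar R) :
  theta_bar thl thh s <= thh.
Proof.
rewrite /theta_bar; case: asboolP => [//|/eqP/set0P[x Sx]].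
apply: le_trans (ltW Sx.1.2).
by apply: ge_ereal_inf; exists x%:E => //; exists x.
Qed.

Lemma theta_bar_lt {R : realType} (thl : R) (thh : \bar R) (s : R -> \bar R) :
  theta_bar thl thh s < thh -> exists2 x, Theta thl thh x & s x = +oo.
Proof.
rewrite /theta_bar; case: asboolP => [_|/eqP/set0P[x [Tx sx]] _]; first by rewrite ltxx.
by exists x.
Qed.

Lemma payoff_pinfty {R : realType} (y : \bar R) (th : R) :
  payoff +oo y th = th%:E - y.
Proof. by rewrite /payoff; case: y => [r| |] //=; rewrite ltry. Qed.

Lemma payoff_EFin {R : realType} (r s th : R) :
  payoff r%:E s%:E th =
  (if (s < r)%R then th - s else if r == s then th / 2 - r else - r)%:E.
Proof. by rewrite /payoff lte_fin eqe; case: ifP => _ //; case: ifP. Qed.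

Lemma payoff0_ge0 {R : realType} (y : \bar R) (th : R) :
  0 <= y -> (0 <= th)%R -> 0 <= payoff 0 y th.
Proof.
move=> y0 th0; rewrite /payoff ltNge y0 /=.
by case: eqP => // _; rewrite sube0 lee_fin divr_ge0.
Qed.

Lemma abse_payoff_EFin_le {R : realType} (r th : R) (y : \bar R) :
  (0 <= r)%R -> (0 <= th)%R -> 0 <= y -> `|payoff r%:E y th| <= (th + r)%:E.
Proof.
move=> r0 th0; case: y => [s| |] // s0.
- rewrite lee_fin in s0; rewrite payoff_EFin abse_EFin lee_fin.
  case: ifPn => [sr|_]; last case: ifPn => _;
    by rewrite ler_norml; apply/andP; split; lra.
- by rewrite /payoff ltNge leey /= lee_fin normrN ger0_norm // lerDr.
Qed.

Lemma measurable_payoff {R : realType} (D : set R) (sj : R -> \bar R) (a : \bar R) (th : R) :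
  measurable D -> measurable_fun D sj -> measurable_fun D (fun t => payoff a (sj t) th).
Proof.
move=> mD ms; rewrite /payoff.
have mlt : measurable_fun D (fun t => sj t < a) by exact: measurable_fun_lte.
have msS (E : set R) : E `<=` D -> measurable_fun E sj.
  by move=> ED; exact: measurable_funS mD ED ms.
apply: measurable_fun_if => //.
- by apply: emeasurable_funB => //; apply: msS; exact: subIsetl.
- apply: measurable_fun_if => //; first exact: mlt.
  by apply: measurable_fun_eqe => //; apply: msS; exact: subIsetl.
Qed.

Definition fight_gain {R : realType} (r : R) (y : \bar R) (th : R) : \bar R :=
  payoff +oo y th - payoff r%:E y th.

Lemma fight_gain_single_crossing {R : realType} {r s th0 th : R} :
  (0 <= r)%R -> (0 <= s)%R -> (th0 < th)%R ->
  0 <= fight_gain r s%:E th - fight_gain r s%:E th0 /\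
  ((r <= s)%R -> ((th - th0) / 2)%:E <= fight_gain r s%:E th - fight_gain r s%:E th0).
Proof.
move=> r0 s0 lt; rewrite /fight_gain !payoff_pinfty !payoff_EFin.
have [sr|rs|<-] := ltrgtP s r;
  rewrite ?sr ?eqxx ?(gt_eqF rs) ?(lt_eqF sr) /= -!EFinD !lee_fin;
  by split => [|rs']; lra.
Qed.

Section war_of_attrition.
Context {R : realType} {thl : R} {thh : \bar R} (P : probability R R).
Hypothesis thl_ge0 : (0 <= thl)%R.
Local Notation Th := (Theta thl thh).

Lemma Theta_ge0 {th} : Th th -> (0 <= th)%R.
Proof. by case=> lth _; apply: ltW; apply: le_lt_trans lth. Qed.

Lemma strategy_integrable {sj th0} :
  strategy thl thh sj -> Th th0 ->
  exp_payoff P thl thh sj 0 th0 <= exp_payoff P thl thh sj +oo th0 ->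
  P.-integrable Th sj.
Proof.
move=> [ms s0] T0 br0; have mT := measurable_Theta thl thh.
apply/integrableP; split => //.
under eq_integral => t /[1!inE] Tt do rewrite gee0_abs ?s0 //.
apply: (@integral_cstB_ge0_lt_pinfty _ _ _ P _ _ th0) => //.
- exact: le_lt_trans (probability_le1 P mT) (ltry 1).
- exact: Theta_ge0.
- have -> : \int[P]_(t in Th) (th0%:E - sj t) = exp_payoff P thl thh sj +oo th0.
    by apply: eq_integral => t _; rewrite payoff_pinfty.
  apply: le_trans br0; apply: integral_ge0 => t Tt.
  by apply: payoff0_ge0; [exact: s0 | exact: Theta_ge0 T0].
Qed.

Lemma integrable_payoff_pinfty sj th :
  P.-integrable Th sj -> P.-integrable Th (fun t => payoff +oo (sj t) th).
Proof.
move=> isj; under eq_fun do rewrite payoff_pinfty.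
apply: (integrableB (measurable_Theta thl thh) _ isj).
exact: finite_measure_integrable_cst (measurable_Theta thl thh).
Qed.

Lemma integrable_payoff_EFin sj r th :
  strategy thl thh sj -> (0 <= r)%R -> (0 <= th)%R ->
  P.-integrable Th (fun t => payoff r%:E (sj t) th).
Proof.
move=> [ms s0] r0 th0; have mT := measurable_Theta thl thh.
apply: (le_integrable mT (g := EFin \o cst (th + r)%R)).
- exact: measurable_payoff.
- move=> t Tt /=; rewrite ger0_norm ?addr_ge0 //.
  exact: abse_payoff_EFin_le (s0 t Tt).
- exact: finite_measure_integrable_cst.
Qed.

Lemma opponent_outlast_EFin_null {sj th0 th r} :
  strategy thl thh sj -> P.-integrable Th sj ->
  Th th0 -> Th th -> (th0 < th)%R -> (0 <= r)%R ->
  exp_payoff P thl thh sj r%:E th0 <= exp_payoff P thl thh sj +oo th0 ->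
  exp_payoff P thl thh sj +oo th <= exp_payoff P thl thh sj r%:E th ->
  P (Th `&` [set t | r%:E <= sj t]) = 0.
Proof.
move=> stj isj T0 T1 lt r0 br0 br1; have [ms s0] := stj.
have mT := measurable_Theta thl thh.
have iP phi := integrable_payoff_pinfty sj phi isj.
have iE phi : (0 <= phi)%R -> P.-integrable Th (fun t => payoff r%:E (sj t) phi).
  exact: integrable_payoff_EFin.
have iF phi : (0 <= phi)%R -> P.-integrable Th (fun t => fight_gain r (sj t) phi).
  by move=> phi0; apply: integrableB => //; exact: iE.
have [th0_ge0 th_ge0] := (Theta_ge0 T0, Theta_ge0 T1).
(* Where [sj t = +oo] both gains are [-oo], so their difference carries no
   information; that set is null because [sj] is integrable. *)
set N := Th `&` sj @^-1` [set +oo].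
have sfin t : (Th `\` N) t -> exists2 s, (0 <= s)%R & sj t = s%:E.
  move=> [Tt Nt]; case Es: (sj t) (s0 t Tt) => [s| |] // s_ge0.
  - by exists s; rewrite -?lee_fin.
  - by exfalso; apply: Nt; split.
apply: (@integral_le0_null _ _ _ P _ _ N
          (fun t => fight_gain r (sj t) th - fight_gain r (sj t) th0) ((th - th0) / 2)%R).
- exact: mT.
- exact: emeasurable_fun_c_infty.
- exact: ms.
- by move=> t [].
- exact: integrable_pinfty_null.
- by apply: integrableB => //; exact: iF.
- lra.
- move=> t /sfin[s s_ge0 ->].
  by have [] := fight_gain_single_crossing r0 s_ge0 lt.
- move=> t [[Tt rs] Nt]; have [s s_ge0 Es] := sfin t (conj Tt Nt).
  move: rs; rewrite /= Es lee_fin => rs.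
  by have [_ /(_ rs)] := fight_gain_single_crossing r0 s_ge0 lt.
- rewrite integralB ?iF // !integralB ?iE //.
  rewrite sube_le0 (@le_trans _ _ 0) //; first by rewrite sube_le0.
  by rewrite sube_ge0 ?integrable_fin_num ?iE.
Qed.

Lemma opponent_outlast_null {si sj th0 th} :
  strategy thl thh si -> strategy thl thh sj -> best_response P thl thh si sj ->
  Th th0 -> si th0 = +oo -> Th th -> (th0 < th)%R ->
  P (Th `&` [set t | si th <= sj t]) = 0.
Proof.
move=> [_ si0] stj br T0 i0 T1 lt.
have isj : P.-integrable Th sj.
  by apply: (strategy_integrable stj T0); rewrite -i0; exact: br.
have := si0 th T1; case Eth: (si th) => [r| |] // r0.
- rewrite lee_fin in r0.
  apply: (opponent_outlast_EFin_null stj isj T0 T1 lt r0).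
  + by rewrite -i0; apply: br; rewrite ?lee_fin.
  + by rewrite -Eth; apply: br; rewrite ?leey.
- rewrite -(integrable_pinfty_null P (measurable_Theta thl thh) isj).
  congr (P _); apply/seteqP; split => t [Tt /= h]; split => //=.
  + by apply/eqP; rewrite -leye_eq.
  + by rewrite h.
Qed.

End war_of_attrition.

Theorem lemma4 (R : realType) (thl : R) (thh : \bar R)
  (P : probability R R) (f : R -> R)
  (s1 s2 : R -> \bar R) :
  (0 <= thl)%R -> thl%:E < thh ->
  (forall A : set R, measurable A ->
     P A = \int[lebesgue_measure]_(x in A) (f x)%:E) ->
  P (Theta thl thh) = 1 ->
  (forall x, Theta thl thh x -> {for x, continuous f}) ->
  (forall x, Theta thl thh x -> (0 < f x)%R) ->
  BNE P thl thh s1 s2 ->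
  maxe (theta_bar thl thh s1) (theta_bar thl thh s2) = thh.
Proof.
move=> thl0 _ Pf _ fc fp [st1 st2 br1 br2].
have := theta_bar_le thl thh s1; rewrite le_eqVlt => /predU1P[->|/theta_bar_lt[t1 T1 i1]].
  exact/max_idPl/theta_bar_le.
have := theta_bar_le thl thh s2; rewrite le_eqVlt => /predU1P[->|/theta_bar_lt[t2 T2 i2]].
  exact/max_idPr/theta_bar_le.
exfalso; set m := Num.max t1 t2.
have Tm : Theta thl thh m by rewrite /m maxEle; case: ifP.
set S := Theta thl thh `&` [set x | m < x]%R.
have oS : open S by apply: openI; [exact: open_Theta | exact: open_gt].
have [x Tx mx] := Theta_exists_gt Tm.
have PS : 0 < P S.
  by apply: (density_open_gt0 Pf oS) (fp x Tx) => [y [Ty _]|//]; exact: fc.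
have [[ms1 s1_ge0] [ms2 _]] := (st1, st2).
have SD : S `<=` Theta thl thh by move=> ? [].
apply: (no_mutual_outlasting P (measurable_Theta thl thh) (open_measurable oS)
          SD PS ms1 ms2) => [t [Tt _]|t [Tt mt]|t [Tt mt]].
- exact: s1_ge0.
- apply: (opponent_outlast_null P thl0 st1 st2 br1 T1 i1 Tt).
  by apply: le_lt_trans mt; rewrite le_max lexx.
- apply: (opponent_outlast_null P thl0 st2 st1 br2 T2 i2 Tt).
  by apply: le_lt_trans mt; rewrite le_max lexx orbT.
Qed.
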